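(* For every $k$-ring $R$, the category $R$-$\mathcal{U}Mod$ of left $R$-$k$-modules is complete and cocomplete.
   Context: $\mathcal{U}$ is the category of compactly generated weakly Hausdorff spaces (with products the $k$-ified products). A $k$-ring is a ring $R$ with a compactly generated weakly Hausdorff topology making $R$ an abelian group object in $\mathcal{U}$ and multiplication $R\times R\to R$ continuous. A left $R$-$k$-module is a left $R$-module with a compactly generated weakly Hausdorff topology making addition $A\times A\to A$ and the action $R\times A\to A$ continuous (products in $\mathcal{U}$); morphisms are continuous $R$-linear maps. *)

From Stdlib Require List.
From HB Require Import structures.
From mathcomp Require Import all_boot all_order all_algebra.
Set Implicit Arguments. Unset Strict Implicit. Unset Printing Implicit Defensive.
Import GRing.Theory.
Local Open Scope ring_scope.

Record topology (X : Type) := Topology {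
  open : (X -> Prop) -> Prop;
  open_full : open (fun _ => True);
  open_inter : forall U V, open U -> open V -> open (fun x => U x /\ V x);
  open_union : forall F : (X -> Prop) -> Prop,
      (forall U, F U -> open U) -> open (fun x => exists U, F U /\ U x)
}.

(* Many constructions below (products, k-ification) are naturally given as
   bare families of open sets; [opens X] is such a family. *)
Definition opens (X : Type) := (X -> Prop) -> Prop.

Definition closed (X : Type) (O : opens X) (A : X -> Prop) : Prop :=
  O (fun x => ~ A x).

Definition continuous (X Y : Type) (OX : opens X) (OY : opens Y)
  (f : X -> Y) : Prop :=
  forall V, OY V -> OX (fun x => V (f x)).

Definition compact_space (X : Type) (O : opens X) : Prop :=
  forall (J : Type) (U : J -> X -> Prop),
    (forall j, O (U j)) -> (forall x, exists j, U j x) ->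
    exists l : seq J, forall x, exists2 j, List.In j l & U j x.

Definition hausdorff_space (X : Type) (O : opens X) : Prop :=
  forall x y : X, x <> y -> exists U V, O U /\ O V /\ U x /\ V y /\
    (forall z, U z -> V z -> False).

Definition k_closed (X : Type) (O : opens X) (A : X -> Prop) : Prop :=
  forall (K : Type) (OK : topology K),
    compact_space (open OK) -> hausdorff_space (open OK) ->
    forall u : K -> X, continuous (open OK) O u -> closed (open OK) (fun k => A (u k)).

Definition compactly_generated (X : Type) (O : opens X) : Prop :=
  forall A, k_closed O A -> closed O A.

Definition weakly_hausdorff (X : Type) (O : opens X) : Prop :=
  forall (K : Type) (OK : topology K),
    compact_space (open OK) -> hausdorff_space (open OK) ->
    forall u : K -> X, continuous (open OK) O u -> closed O (fun x => exists k, u k = x).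

Definition cgwh (X : Type) (O : topology X) : Prop :=
  compactly_generated (open O) /\ weakly_hausdorff (open O).

Definition kify (X : Type) (O : opens X) : opens X :=
  fun W => k_closed O (fun x => ~ W x).

Definition prod_opens (X Y : Type) (OX : opens X) (OY : opens Y) : opens (X * Y) :=
  fun W => forall p, W p -> exists U V, OX U /\ OY V /\ U p.1 /\ V p.2 /\
     (forall x y, U x -> V y -> W (x, y)).

(* The product in U: k-ification of the product topology. *)
Definition kprod (X Y : Type) (OX : opens X) (OY : opens Y) : opens (X * Y) :=
  kify (prod_opens OX OY).

Record kring := KRing {
  kr :> pzRingType;
  krtop : topology kr;
  kr_cgwh : cgwh krtop;
  kr_add : continuous (kprod (open krtop) (open krtop)) (open krtop)
             (fun p : kr * kr => p.1 + p.2);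
  kr_opp : continuous (open krtop) (open krtop) (fun x : kr => - x);
  kr_mul : continuous (kprod (open krtop) (open krtop)) (open krtop)
             (fun p : kr * kr => p.1 * p.2)
}.
(* (continuity of the unit map 0 : * -> R is automatic) *)

Record kmod (R : kring) := KMod {
  kcar :> lmodType (kr R);
  kmtop : topology kcar;
  km_cgwh : cgwh kmtop;
  km_add : continuous (kprod (open kmtop) (open kmtop)) (open kmtop)
             (fun p : kcar * kcar => p.1 + p.2);
  km_act : continuous (kprod (open (krtop R)) (open kmtop)) (open kmtop)
             (fun p : kr R * kcar => p.1 *: p.2)
}.

Record kmod_hom (R : kring) (A B : kmod R) := KModHom {
  hfun :> A -> B;
  hfun_linear : forall (a : kr R) (x y : A), hfun (a *: x + y) = a *: hfun x + hfun y;
  hfun_cont : continuous (open (kmtop A)) (open (kmtop B)) hfun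
}.

Record small_cat := SmallCat {
  cobj :> Type;
  chom : cobj -> cobj -> Type;
  cid : forall i, chom i i;
  ccomp : forall i j k, chom j k -> chom i j -> chom i k;
  ccomp_id_l : forall i j (f : chom i j), ccomp (cid j) f = f;
  ccomp_id_r : forall i j (f : chom i j), ccomp f (cid i) = f;
  ccomp_assoc : forall i j k l (h : chom k l) (g : chom j k) (f : chom i j),
      ccomp h (ccomp g f) = ccomp (ccomp h g) f
}.

Record diagram (C : small_cat) (R : kring) := Diagram {
  dobj :> C -> kmod R;
  dmap : forall i j, chom i j -> kmod_hom (dobj i) (dobj j);
  dmap_id : forall i (x : dobj i), dmap (cid i) x = x;
  dmap_comp : forall i j k (g : chom j k) (f : chom i j) (x : dobj i),
      dmap (ccomp g f) x = dmap g (dmap f x)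
}.

Definition is_limit (C : small_cat) (R : kring) (D : diagram C R)
  (L : kmod R) (pi : forall i, kmod_hom L (D i)) : Prop :=
  (forall i j (f : chom i j) (x : L), dmap D f (pi i x) = pi j x) /\
  forall (M : kmod R) (tau : forall i, kmod_hom M (D i)),
    (forall i j (f : chom i j) (x : M), dmap D f (tau i x) = tau j x) ->
    exists u : kmod_hom M L,
      (forall i (x : M), pi i (u x) = tau i x) /\
      forall v : kmod_hom M L, (forall i (x : M), pi i (v x) = tau i x) ->
        forall x, v x = u x.

Definition is_colimit (C : small_cat) (R : kring) (D : diagram C R)
  (L : kmod R) (iota : forall i, kmod_hom (D i) L) : Prop :=
  (forall i j (f : chom i j) (x : D i), iota j (dmap D f x) = iota i x) /\
  forall (M : kmod R) (tau : forall i, kmod_hom (D i) M),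
    (forall i j (f : chom i j) (x : D i), tau j (dmap D f x) = tau i x) ->
    exists u : kmod_hom L M,
      (forall i (x : D i), u (iota i x) = tau i x) /\
      forall v : kmod_hom L M, (forall i (x : D i), v (iota i x) = tau i x) ->
        forall y, v y = u y.

Arguments is_limit {C R} D L pi.
Arguments is_colimit {C R} D L iota.

Definition kmod_complete (R : kring) : Prop :=
  forall (C : small_cat) (D : diagram C R),
    exists (L : kmod R) (pi : forall i, kmod_hom L (D i)), is_limit D L pi.

Definition kmod_cocomplete (R : kring) : Prop :=
  forall (C : small_cat) (D : diagram C R),
    exists (L : kmod R) (iota : forall i, kmod_hom (D i) L), is_colimit D L iota.

(* Limits and colimits are built on the underlying modules and then given the
   k-ification of the initial topology of a jointly injective family of linear
   maps f_i into k-modules: a set is open when its preimage under every map g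
   from a compact Hausdorff space with all f_i o g continuous is open.  This
   topology is compactly generated by construction, weakly Hausdorff because
   the f_i separate points of weakly Hausdorff spaces, and makes addition and
   the action continuous because on compact Hausdorff test spaces product and
   k-product topologies have the same continuous maps.  The limit is the module
   of compatible families with the projections; the colimit is the module of
   formal sums of elements of the D i modulo equality under every cocone, with
   the family of all cocones (a large index set over a small carrier), so that
   the mediating map of a cocone is just its coordinate. *)

From HB Require Import structures.
From mathcomp Require Import all_boot all_order all_algebra boolp generic_quotient.
Set Implicit Arguments. Unset Strict Implicit. Unset Printing Implicit Defensive.
Import GRing.Theory.
Local Open Scope ring_scope.
Local Open Scope quotient_scope.

Section OpenSets.
Variables (X : Type) (O : topology X).

Lemma open_ext (U V : X -> Prop) : open O U -> (forall x, U x <-> V x) -> open O V.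
Proof. by move=> oU UV; suff <- : U = V by []; apply/funext => x; apply/propext. Qed.

Lemma open_bigcup (F : (X -> Prop) -> Prop) (W : X -> Prop) :
  (forall U, F U -> open O U) -> (forall x, W x <-> exists U, F U /\ U x) -> open O W.
Proof. by move=> oF FW; apply: open_ext (open_union oF) _ => x; rewrite FW. Qed.

Lemma open_nbhs (W : X -> Prop) :
  (forall x, W x -> exists U, [/\ open O U, U x & forall z, U z -> W z]) -> open O W.
Proof.
move=> nbhsW; apply: (@open_bigcup (fun U => open O U /\ forall z, U z -> W z)) => [U []//|x].
split=> [/nbhsW [U [oU Ux UW]]|[U [[_ UW] /UW//]]].
by exists U.
Qed.

Lemma open0 : open O (fun _ => False).
Proof. by apply: (@open_bigcup (fun _ => False)) => // x; split=> [|[U []]]. Qed.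

Lemma open_finite_inter (J : Type) (W : J -> X -> Prop) (l : seq J) :
  (forall j, List.In j l -> open O (W j)) ->
  open O (fun z => forall j, List.In j l -> W j z).
Proof.
elim: l => [_|j l IHl oW].
  by apply: open_ext (open_full O) _ => x; split=> // _ j [].
apply: open_ext (open_inter (oW j (or_introl erefl)) (IHl (fun k lk => oW k (or_intror lk)))) _.
by move=> x; split=> [[Wj Wl] k [<-|/Wl]|Wx] //; split=> [|k lk]; apply: Wx; [left|right].
Qed.

Lemma compact_sep (F G : X -> Prop) : compact_space (open O) -> closed (open O) F ->
  (forall x, F x -> exists U V, [/\ open O U, open O V, U x, (forall z, G z -> V z)
                                  & forall z, U z -> V z -> False]) ->
  exists U V, [/\ open O U, open O V, (forall z, F z -> U z), (forall z, G z -> V z)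
                & forall z, U z -> V z -> False].
Proof.
move=> cpt cF sepF.
have {}sepF x : exists UV : (X -> Prop) * (X -> Prop), [/\ open O UV.1, open O UV.2,
    F x -> UV.1 x, (forall z, G z -> UV.2 z) & forall z, UV.1 z -> UV.2 z -> False].
  have [/sepF [U [V [oU oV Ux GV dUV]]]|Fx] := EM (F x); first by exists (U, V).
  by exists (fun _ => False, fun _ => True); split=> //; [apply: open0 | apply: open_full].
have [UV sepUV] := choice sepF.
pose W (j : option X) := if j is Some x then (UV x).1 else fun z => ~ F z.
have [|z|l cover] := cpt _ W.
- by case=> [x|//]; have [] := sepUV x.
- have [Fz|] := EM (F z); last by exists None.
  by exists (Some z); have [_ _ /(_ Fz)] := sepUV z.
exists (fun z => exists x, List.In (Some x) l /\ (UV x).1 z).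
exists (fun z => forall j, List.In j l -> if j is Some x then (UV x).2 z else True).
split.
- apply: (@open_bigcup (fun U => exists x, List.In (Some x) l /\ U = (UV x).1)).
    by move=> U [x [_ ->]]; have [] := sepUV x.
  by move=> z; split=> [[x [lx Uz]]|[U [[x [lx ->]] Uz]]]; [exists (UV x).1; split=> //|]; exists x.
- by apply: open_finite_inter => -[x|] _; [have [] := sepUV x | apply: open_full].
- by move=> z Fz; have [[x|//] lx Wz] := cover z; exists x.
- by move=> z Gz [x|//] _; have [_ _ _ GV _] := sepUV x; apply: GV.
- move=> z [x [lx Uz]] /(_ _ lx) Vz.
  by have [_ _ _ _ /(_ z Uz Vz)] := sepUV x.
Qed.

Lemma compact_hausdorff_normal (F G : X -> Prop) :
  compact_space (open O) -> hausdorff_space (open O) ->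
  closed (open O) F -> closed (open O) G -> (forall z, F z -> G z -> False) ->
  exists U V, [/\ open O U, open O V, (forall z, F z -> U z), (forall z, G z -> V z)
                & forall z, U z -> V z -> False].
Proof.
move=> cpt hs cF cG dFG; apply: compact_sep => // x Fx.
have [|V [U [oV oU GV Ux dVU]]] := @compact_sep G (eq^~ x) cpt cG.
  move=> y Gy; have yx : y <> x by move=> yx; apply: (dFG x) => //; rewrite -yx.
  have [V [U [oV [oU [Vy [Ux dVU]]]]]] := hs y x yx.
  by exists V, U; split=> // z ->.
by exists U, V; split=> // [|z Uz Vz]; [apply: Ux | apply: (dVU z)].
Qed.

End OpenSets.

Section Subspace.
Variables (X : Type) (O : topology X) (P : X -> Prop).

Definition sub_opens : opens {x | P x} :=
  fun W => exists U, open O U /\ forall s, W s <-> U (proj1_sig s).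

Lemma sub_opens_full : sub_opens (fun _ => True).
Proof. by exists (fun _ => True); split=> //; apply: open_full. Qed.

Lemma sub_opens_inter U V : sub_opens U -> sub_opens V -> sub_opens (fun s => U s /\ V s).
Proof.
move=> [U' [oU' UU']] [V' [oV' VV']]; exists (fun x => U' x /\ V' x).
by split=> [|s]; [apply: open_inter | rewrite UU' VV'].
Qed.

Lemma sub_opens_union (F : ({x | P x} -> Prop) -> Prop) :
  (forall U, F U -> sub_opens U) -> sub_opens (fun s => exists U, F U /\ U s).
Proof.
move=> oF; pose F' U' := open O U' /\ exists U, F U /\ forall s, U s <-> U' (proj1_sig s).
exists (fun x => exists U', F' U' /\ U' x); split=> [|s]; first by apply: open_union => U' [].
split=> [[U [FU Us]]|[U' [[_ [U [FU UU']]] U's]]]; last by exists U; rewrite UU'.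
by have [U' [oU' UU']] := oF U FU; exists U'; split; [split=> //; exists U | rewrite -UU'].
Qed.

Definition sub_top : topology {x | P x} :=
  Topology sub_opens_full sub_opens_inter sub_opens_union.

Lemma closed_sub_compact : compact_space (open O) -> closed (open O) P ->
  compact_space (open sub_top).
Proof.
move=> cpt cP J U oU cover.
have [U' oU'] := choice oU.
pose W (j : option J) := if j is Some j then U' j else fun x => ~ P x.
have [|x|l coverW] := cpt _ W.
- by case=> [j|//]; have [] := oU' j.
- have [Px|] := EM (P x); last by exists None.
  by have [j Uj] := cover (exist _ x Px); exists (Some j); apply/((oU' j).2 (exist _ x Px)).
exists (pmap id l) => s; have [[j|] lj Ws] := coverW (proj1_sig s); last first.
  by case: Ws; apply: proj2_sig.
exists j; last exact/((oU' j).2 s).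
elim: l lj {coverW} => [|[k|] l IHl] //=; last by case=> // /IHl.
by case=> [[->]|/IHl]; [left | right].
Qed.

Lemma sub_hausdorff : hausdorff_space (open O) -> hausdorff_space (open sub_top).
Proof.
move=> hs [x Px] [y Py] st.
have [U [V [oU [oV [Ux [Vy dUV]]]]]] := hs x y (fun xy => st (eq_exist _ _ xy)).
exists (fun s => U (proj1_sig s)), (fun s => V (proj1_sig s)).
by do !split=> //; [exists U | exists V | move=> z; apply: dUV].
Qed.

End Subspace.

Lemma continuous_comp (X Y Z : Type) (OX : opens X) (OY : opens Y) (OZ : opens Z)
  (f : X -> Y) (g : Y -> Z) :
  continuous OX OY f -> continuous OY OZ g -> continuous OX OZ (fun x => g (f x)).
Proof. by move=> cf cg W /cg /cf. Qed.

Definition point_top : topology unit :=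
  @Topology unit (fun _ => True) I (fun _ _ _ _ => I) (fun _ _ => I).

Lemma point_compact : compact_space (open point_top).
Proof. by move=> J U _ /(_ tt) [j Uj]; exists [:: j] => -[]; exists j; [left|]. Qed.

Lemma point_hausdorff : hausdorff_space (open point_top).
Proof. by move=> [] []. Qed.

Section WeaklyHausdorff.
Variables (X : Type) (O : topology X).
Hypothesis whX : weakly_hausdorff (open O).

Lemma weakly_hausdorff_open_neq x : open O (fun z => z <> x).
Proof.
apply: open_ext (whX point_compact point_hausdorff (u := fun _ => x) (fun _ _ => I)) _.
by move=> z; split=> [nx zx|zx [_ xz]]; [apply: nx; exists tt | apply: zx].
Qed.

(* The image of a compact Hausdorff space is closed, so the images of the
   complements of the two separating opens of the fibres work. *)
Lemma weakly_hausdorff_sep (K : Type) (OK : topology K) (p : K -> X) (x y : X) :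
  compact_space (open OK) -> hausdorff_space (open OK) ->
  continuous (open OK) (open O) p -> x <> y ->
  exists A B, [/\ open O A, open O B, A x, B y & forall k, A (p k) -> B (p k) -> False].
Proof.
move=> cpt hs cp xy.
have closed_fibre z : closed (open OK) (fun k => p k = z).
  by apply: open_ext (cp _ (weakly_hausdorff_open_neq z)) _ => k.
have [U [V [oU oV pxU pyV dUV]]] := compact_hausdorff_normal cpt hs
  (closed_fibre x) (closed_fibre y) (fun k pkx pky => xy (etrans (esym pkx) pky)).
pose avoid (U : K -> Prop) z := ~ exists s : {k | ~ U k}, p (proj1_sig s) = z.
have open_avoid W : open OK W -> open O (avoid W).
  move=> oW; have cW : closed (open OK) (fun k => ~ W k).
    by apply: open_ext oW _ => k; split=> [Wk []|/contrapT].
  apply: (whX (closed_sub_compact cpt cW) (sub_hausdorff hs) (u := fun s => p (proj1_sig s))).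
  by move=> V' /cp oV'; exists (fun k => V' (p k)).
exists (avoid U), (avoid V); split; rewrite /avoid.
- exact: open_avoid.
- exact: open_avoid.
- by move=> [[k Uk] /= pkx]; apply/Uk/pxU.
- by move=> [[k Vk] /= pky]; apply/Vk/pyV.
move=> k nU nV; apply: (dUV k); apply: contrapT => W; [apply: nU | apply: nV];
  by exists (exist _ k W).
Qed.

End WeaklyHausdorff.

Section ProductTopology.
Variables (Y Z K : Type) (OY : topology Y) (OZ : topology Z) (OK : topology K).

Lemma continuous_fst (h : K -> Y * Z) :
  continuous (open OK) (prod_opens (open OY) (open OZ)) h ->
  continuous (open OK) (open OY) (fun k => (h k).1).
Proof.
move=> ch V oV; apply: (ch (fun p => V p.1)) => p Vp.
by exists V, (fun _ => True); do !split=> //; apply: open_full.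
Qed.

Lemma continuous_snd (h : K -> Y * Z) :
  continuous (open OK) (prod_opens (open OY) (open OZ)) h ->
  continuous (open OK) (open OZ) (fun k => (h k).2).
Proof.
move=> ch V oV; apply: (ch (fun p => V p.2)) => p Vp.
by exists (fun _ => True), V; do !split=> //; apply: open_full.
Qed.

Lemma continuous_pair (h1 : K -> Y) (h2 : K -> Z) :
  continuous (open OK) (open OY) h1 -> continuous (open OK) (open OZ) h2 ->
  continuous (open OK) (prod_opens (open OY) (open OZ)) (fun k => (h1 k, h2 k)).
Proof.
move=> c1 c2 W oW; apply: open_nbhs => k /oW [U [V [oU [oV [Uk [Vk UVW]]]]]].
exists (fun k => U (h1 k) /\ V (h2 k)); split=> [|//|z []]; last exact: UVW.
exact: open_inter (c1 _ oU) (c2 _ oV).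
Qed.

Lemma continuous_kprod (h : K -> Y * Z) :
  compact_space (open OK) -> hausdorff_space (open OK) ->
  continuous (open OK) (prod_opens (open OY) (open OZ)) h ->
  continuous (open OK) (kprod (open OY) (open OZ)) h.
Proof.
move=> cpt hs ch W /(_ K OK cpt hs h ch) oW.
by apply: open_ext oW _ => k; split=> [/contrapT|Wk []].
Qed.

End ProductTopology.

Section InitialKTopology.
Variables (L I : Type) (X : I -> Type) (OX : forall i, topology (X i)) (f : forall i, L -> X i).

Definition kinit_test (K : Type) (OK : topology K) (g : K -> L) : Prop :=
  forall i, continuous (open OK) (open (OX i)) (fun k => f i (g k)).

Definition kinit_opens : opens L := fun W =>
  forall (K : Type) (OK : topology K), compact_space (open OK) -> hausdorff_space (open OK) ->
  forall g : K -> L, kinit_test OK g -> open OK (fun k => W (g k)).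

Lemma kinit_opens_full : kinit_opens (fun _ => True).
Proof. by move=> K OK _ _ g _; apply: open_full. Qed.

Lemma kinit_opens_inter U V : kinit_opens U -> kinit_opens V -> kinit_opens (fun x => U x /\ V x).
Proof. by move=> oU oV K OK cpt hs g tg; apply: open_inter; [apply: oU | apply: oV]. Qed.

Lemma kinit_opens_union (F : (L -> Prop) -> Prop) :
  (forall U, F U -> kinit_opens U) -> kinit_opens (fun x => exists U, F U /\ U x).
Proof.
move=> oF K OK cpt hs g tg.
apply: (@open_bigcup _ _ (fun V => exists U, F U /\ V = (fun k => U (g k)))) => [_ [U [FU ->]]|k].
  exact: oF.
by split=> [[U [FU Ugk]]|[_ [[U [FU ->]] Ugk]]]; [exists (fun k => U (g k)); split=> //|]; exists U.
Qed.

Definition kinit_top : topology L := Topology kinit_opens_full kinit_opens_inter kinit_opens_union.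

Lemma kinit_continuous_proj i : continuous kinit_opens (open (OX i)) (f i).
Proof. by move=> V oV K OK cpt hs g /(_ i); apply. Qed.

Lemma kinit_continuous_test (K : Type) (OK : topology K) (g : K -> L) :
  compact_space (open OK) -> hausdorff_space (open OK) ->
  kinit_test OK g -> continuous (open OK) kinit_opens g.
Proof. by move=> cpt hs tg W /(_ K OK cpt hs g tg). Qed.

Lemma kinit_continuous_into (N : Type) (ON : topology N) (u : N -> L) :
  compactly_generated (open ON) ->
  (forall i, continuous (open ON) (open (OX i)) (fun x => f i (u x))) ->
  continuous (open ON) kinit_opens u.
Proof.
move=> cgN cu W oW; have : k_closed (open ON) (fun x => ~ W (u x)).
  move=> K OK cpt hs h ch; apply: open_ext (oW K OK cpt hs _ _) _ => [i|k].
    exact: continuous_comp ch (cu i).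
  by split=> [Wk []|/contrapT].
by move/cgN/open_ext; apply=> x; split=> [/contrapT|Wx []].
Qed.

Lemma kinit_compactly_generated : compactly_generated kinit_opens.
Proof. by move=> A kA K OK cpt hs g /(kinit_continuous_test cpt hs); apply: kA. Qed.

Lemma kinit_continuous_from_kprod (Y Z : Type) (OY : topology Y) (OZ : topology Z)
    (op : Y * Z -> L) :
  (forall (K : Type) (OK : topology K), compact_space (open OK) -> hausdorff_space (open OK) ->
     forall h : K -> Y * Z, continuous (open OK) (prod_opens (open OY) (open OZ)) h ->
     kinit_test OK (fun k => op (h k))) ->
  continuous (kprod (open OY) (open OZ)) kinit_opens op.
Proof.
move=> top W oW K OK cpt hs h ch.
by apply: open_ext (oW K OK cpt hs _ (top K OK cpt hs h ch)) _ => k; split=> [Wk []|/contrapT].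
Qed.

Hypothesis whX : forall i, weakly_hausdorff (open (OX i)).
Hypothesis f_inj : forall x y, (forall i, f i x = f i y) -> x = y.

(* A point g k' outside the image of u is separated, for each k, by some
   f i from u k; compactness of K makes finitely many such separations enough. *)
Lemma kinit_weakly_hausdorff : weakly_hausdorff kinit_opens.
Proof.
move=> K OK cpt hs u cu K' OK' cpt' hs' g tg; apply: open_nbhs => k' notim.
have sep k : exists UV : (K -> Prop) * (K' -> Prop), [/\ open OK UV.1, open OK' UV.2,
    UV.1 k, UV.2 k' & forall a b, UV.1 a -> UV.2 b -> u a = g b -> False].
  have [i fi_neq] : exists i, f i (u k) <> f i (g k').
    apply: contrapT => /forallNP fi_eq; apply: notim; exists k.
    by apply: f_inj => i; apply: contrapT; apply: fi_eq.
  have cfu := continuous_comp cu (kinit_continuous_proj (i := i)).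
  have [A [B [oA oB Auk Bgk' dAB]]] := weakly_hausdorff_sep (@whX i) cpt hs cfu fi_neq.
  exists (fun a => A (f i (u a)), fun b => B (f i (g b))); split=> //=; first exact: cfu.
    exact: tg.
  by move=> a b Aa Bb uagb; apply: (dAB a) => //; rewrite uagb.
have [UV sepUV] := choice sep.
have [|k|l cover] := cpt _ (fun k => (UV k).1); first by move=> k; have [] := sepUV k.
  by exists k; have [] := sepUV k.
exists (fun b => forall k, List.In k l -> (UV k).2 b); split.
- by apply: open_finite_inter => k _; have [] := sepUV k.
- by move=> k _; have [] := sepUV k.
move=> b Vb [a uagb]; have [k lk Uka] := cover a.
by have [_ _ _ _ /(_ a b Uka (Vb k lk) uagb)] := sepUV k.
Qed.

Lemma kinit_cgwh : cgwh kinit_top.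
Proof. by split; [apply: kinit_compactly_generated | apply: kinit_weakly_hausdorff]. Qed.

End InitialKTopology.

HB.instance Definition _ (R : kring) (A B : kmod R) (h : kmod_hom A B) :=
  GRing.isLinear.Build (kr R) A B *:%R (hfun h) (hfun_linear h).

Section InitialKModule.
Variables (R : kring) (L : lmodType (kr R)) (I : Type) (M : I -> kmod R).
Variables (f : forall i, {linear L -> M i}).
Hypothesis f_inj : forall x y, (forall i, f i x = f i y) -> x = y.

Let OM i := kmtop (M i).
Let fL i : L -> M i := f i.
Let OL := kinit_opens OM fL.

Lemma kinit_add_continuous : continuous (kprod OL OL) OL (fun p : L * L => p.1 + p.2).
Proof.
apply: (@kinit_continuous_from_kprod _ _ _ _ _ _ _ (kinit_top OM fL) (kinit_top OM fL)).
move=> K OK cpt hs h ch i.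
have fiD : (fun k => fL i ((h k).1 + (h k).2)) =
    (fun k => (fun p : M i * M i => p.1 + p.2) (fL i (h k).1, fL i (h k).2)).
  by apply/funext => k; apply: raddfD.
have cpair : continuous (open OK) (kprod (open (OM i)) (open (OM i)))
    (fun k => (fL i (h k).1, fL i (h k).2)).
  apply: continuous_kprod cpt hs _; apply: continuous_pair.
    exact: continuous_comp (continuous_fst ch) (kinit_continuous_proj (i := i)).
  exact: continuous_comp (continuous_snd ch) (kinit_continuous_proj (i := i)).
by rewrite fiD; apply: continuous_comp cpair (@km_add _ (M i)).
Qed.

Lemma kinit_act_continuous :
  continuous (kprod (open (krtop R)) OL) OL (fun p : kr R * L => p.1 *: p.2).
Proof.
apply: (@kinit_continuous_from_kprod _ _ _ _ _ _ _ (krtop R) (kinit_top OM fL)).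
move=> K OK cpt hs h ch i.
have fiZ : (fun k => fL i ((h k).1 *: (h k).2)) =
    (fun k => (fun p : kr R * M i => p.1 *: p.2) ((h k).1, fL i (h k).2)).
  by apply/funext => k; apply: linearZ.
have cpair : continuous (open OK) (kprod (open (krtop R)) (open (OM i)))
    (fun k => ((h k).1, fL i (h k).2)).
  apply: continuous_kprod cpt hs _; apply: continuous_pair; first exact: continuous_fst ch.
  exact: continuous_comp (continuous_snd ch) (kinit_continuous_proj (i := i)).
by rewrite fiZ; apply: continuous_comp cpair (@km_act _ (M i)).
Qed.

Definition kinit_kmod : kmod R :=
  KMod (kinit_cgwh (fun i => proj2 (km_cgwh (M i))) f_inj)
    kinit_add_continuous kinit_act_continuous.

Definition kinit_proj i : kmod_hom kinit_kmod (M i) :=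
  @KModHom R kinit_kmod (M i) (f i) (linearP (f i)) (kinit_continuous_proj (i := i)).

Definition kinit_lift (N : kmod R) (u : N -> L) (u_lin : linear u)
  (u_cont : forall i, continuous (open (kmtop N)) (open (OM i)) (fun x => f i (u x))) :
  kmod_hom N kinit_kmod :=
  @KModHom R N kinit_kmod u u_lin (kinit_continuous_into (proj1 (km_cgwh N)) u_cont).

End InitialKModule.

Arguments kinit_kmod {R L I M} f f_inj.
Arguments kinit_proj {R L I M} f f_inj i.
Arguments kinit_lift {R L I M} f f_inj {N u} u_lin u_cont.

Section Limit.
Variables (R : kring) (C : small_cat) (D : diagram C R).

Definition compatible (x : forall i, D i) : Prop :=
  forall i j (g : chom i j), dmap D g (x i) = x j.

Definition lim_car := {x : forall i, D i | compatible x}.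

HB.instance Definition _ := gen_eqMixin lim_car.
HB.instance Definition _ := gen_choiceMixin lim_car.

Lemma lim_car_eq (x y : lim_car) : (forall i, proj1_sig x i = proj1_sig y i) -> x = y.
Proof.
by case: x y => [x cx] [y cy] /= xy; apply: eq_exist; apply: functional_extensionality_dep.
Qed.

Definition lim_zero : lim_car := exist compatible (fun i => 0) (fun i j g => raddf0 _).

Definition lim_opp (x : lim_car) : lim_car := exist compatible (fun i => - proj1_sig x i)
  (fun i j g => etrans (raddfN _ _) (congr1 _ (proj2_sig x i j g))).

Definition lim_add (x y : lim_car) : lim_car :=
  exist compatible (fun i => proj1_sig x i + proj1_sig y i)
  (fun i j g => etrans (raddfD _ _ _) (congr2 _ (proj2_sig x i j g) (proj2_sig y i j g))).

Definition lim_scale (a : kr R) (x : lim_car) : lim_car :=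
  exist compatible (fun i => a *: proj1_sig x i)
  (fun i j g => etrans (linearZ _ _) (congr1 _ (proj2_sig x i j g))).

Lemma lim_addA : associative lim_add.
Proof. by move=> x y z; apply: lim_car_eq => i /=; rewrite addrA. Qed.
Lemma lim_addC : commutative lim_add.
Proof. by move=> x y; apply: lim_car_eq => i /=; rewrite addrC. Qed.
Lemma lim_add0 : left_id lim_zero lim_add.
Proof. by move=> x; apply: lim_car_eq => i /=; rewrite add0r. Qed.
Lemma lim_addN : left_inverse lim_zero lim_opp lim_add.
Proof. by move=> x; apply: lim_car_eq => i /=; rewrite addNr. Qed.

HB.instance Definition _ := GRing.isZmodule.Build lim_car lim_addA lim_addC lim_add0 lim_addN.

Lemma lim_scaleA a b x : lim_scale a (lim_scale b x) = lim_scale (a * b) x.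
Proof. by apply: lim_car_eq => i /=; rewrite scalerA. Qed.
Lemma lim_scale1 : left_id 1 lim_scale.
Proof. by move=> x; apply: lim_car_eq => i /=; rewrite scale1r. Qed.
Lemma lim_scaleDr : right_distributive lim_scale +%R.
Proof. by move=> a x y; apply: lim_car_eq => i /=; rewrite scalerDr. Qed.
Lemma lim_scaleDl x : {morph lim_scale^~ x : a b / a + b}.
Proof. by move=> a b; apply: lim_car_eq => i /=; rewrite scalerDl. Qed.

HB.instance Definition _ := GRing.Zmodule_isLmodule.Build (kr R) lim_car
  lim_scaleA lim_scale1 lim_scaleDr lim_scaleDl.

Definition lim_coord (i : C) (x : lim_car) : D i := proj1_sig x i.

HB.instance Definition _ i := GRing.isLinear.Build (kr R) lim_car (D i) *:%R (lim_coord i)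
  (fun a x y => erefl).

Let coord i : {linear lim_car -> D i} := lim_coord i.

Definition lim_kmod : kmod R := kinit_kmod coord lim_car_eq.

Definition lim_proj (i : C) : kmod_hom lim_kmod (D i) := kinit_proj coord lim_car_eq i.

Lemma lim_kmod_is_limit : is_limit D lim_kmod lim_proj.
Proof.
split=> [i j g x|N tau tau_cone]; first exact: (proj2_sig x).
pose u (n : N) : lim_car := exist compatible (fun i => tau i n) (fun i j g => tau_cone i j g n).
have u_lin : linear u by move=> a x y; apply: lim_car_eq => i /=; rewrite linearP.
exists (kinit_lift coord lim_car_eq u_lin (fun i => hfun_cont (tau i))).
by split=> // v vtau x; apply: lim_car_eq => i; apply: vtau.
Qed.

End Limit.

Section Colimit.
Variables (R : kring) (C : small_cat) (D : diagram C R).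

Definition cocone (N : kmod R) (tau : forall i, kmod_hom (D i) N) : Prop :=
  forall i j (g : chom i j) (x : D i), tau j (dmap D g x) = tau i x.

Definition summand := {i : C & D i}.

HB.instance Definition _ := gen_eqMixin summand.
HB.instance Definition _ := gen_choiceMixin summand.

Definition cocone_sum (N : kmod R) (tau : forall i, kmod_hom (D i) N) (s : seq summand) : N :=
  \sum_(p <- s) tau (projT1 p) (projT2 p).

Definition cocone_eq (s t : seq summand) : bool :=
  `[< forall N tau, @cocone N tau -> cocone_sum tau s = cocone_sum tau t >].

Lemma cocone_eq_refl : reflexive cocone_eq.
Proof. by move=> s; apply/asboolP. Qed.

Lemma cocone_eq_sym : symmetric cocone_eq.
Proof. by move=> s t; apply/asboolP/asboolP => st N tau /st. Qed.

Lemma cocone_eq_trans : transitive cocone_eq.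
Proof.
move=> t s u /asboolP st /asboolP tu; apply/asboolP => N tau ctau.
by rewrite (st _ _ ctau) (tu _ _ ctau).
Qed.

Definition colim_car := {eq_quot EquivRel cocone_eq cocone_eq_refl cocone_eq_sym cocone_eq_trans}.

HB.instance Definition _ := Choice.on colim_car.

Definition opp_summand (p : summand) : summand := existT _ (projT1 p) (- projT2 p).
Definition scale_summand (a : kr R) (p : summand) : summand := existT _ (projT1 p) (a *: projT2 p).

Definition colim_zero : colim_car := \pi_colim_car [::].
Definition colim_opp (x : colim_car) : colim_car := \pi_colim_car (map opp_summand (repr x)).
Definition colim_add (x y : colim_car) : colim_car := \pi_colim_car (repr x ++ repr y).
Definition colim_scale (a : kr R) (x : colim_car) : colim_car :=
  \pi_colim_car (map (scale_summand a) (repr x)).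

Definition cocone_val (N : kmod R) (tau : forall i, kmod_hom (D i) N) (x : colim_car) : N :=
  cocone_sum tau (repr x).

Section CoconeVal.
Variables (N : kmod R) (tau : forall i, kmod_hom (D i) N).
Hypothesis ctau : cocone tau.

Lemma cocone_val_pi s : cocone_val tau (\pi_colim_car s) = cocone_sum tau s.
Proof. by have /eqmodP/asboolP := reprK (\pi_colim_car s); apply. Qed.

Lemma cocone_val0 : cocone_val tau colim_zero = 0.
Proof. by rewrite cocone_val_pi /cocone_sum big_nil. Qed.

Lemma cocone_valN x : cocone_val tau (colim_opp x) = - cocone_val tau x.
Proof.
rewrite cocone_val_pi /cocone_sum big_map -sumrN.
by apply: eq_bigr => p _; rewrite raddfN.
Qed.

Lemma cocone_valD x y : cocone_val tau (colim_add x y) = cocone_val tau x + cocone_val tau y.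
Proof. by rewrite cocone_val_pi /cocone_sum big_cat. Qed.

Lemma cocone_valZ a x : cocone_val tau (colim_scale a x) = a *: cocone_val tau x.
Proof.
rewrite cocone_val_pi /cocone_sum big_map scaler_sumr.
by apply: eq_bigr => p _; rewrite linearZ.
Qed.

End CoconeVal.

Lemma colim_car_eq (x y : colim_car) :
  (forall N tau, @cocone N tau -> cocone_val tau x = cocone_val tau y) -> x = y.
Proof. by move=> xy; rewrite -(reprK x) -(reprK y); apply/eqmodP/asboolP. Qed.

Lemma colim_addA : associative colim_add.
Proof. by move=> x y z; apply: colim_car_eq => N tau ctau; rewrite !cocone_valD // addrA. Qed.
Lemma colim_addC : commutative colim_add.
Proof. by move=> x y; apply: colim_car_eq => N tau ctau; rewrite !cocone_valD // addrC. Qed.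
Lemma colim_add0 : left_id colim_zero colim_add.
Proof.
by move=> x; apply: colim_car_eq => N tau ctau; rewrite cocone_valD // cocone_val0 // add0r.
Qed.
Lemma colim_addN : left_inverse colim_zero colim_opp colim_add.
Proof.
move=> x; apply: colim_car_eq => N tau ctau.
by rewrite cocone_valD // cocone_valN // cocone_val0 // addNr.
Qed.

HB.instance Definition _ :=
  GRing.isZmodule.Build colim_car colim_addA colim_addC colim_add0 colim_addN.

Lemma colim_scaleA a b x : colim_scale a (colim_scale b x) = colim_scale (a * b) x.
Proof. by apply: colim_car_eq => N tau ctau; rewrite !cocone_valZ // scalerA. Qed.
Lemma colim_scale1 : left_id 1 colim_scale.
Proof. by move=> x; apply: colim_car_eq => N tau ctau; rewrite cocone_valZ // scale1r. Qed.
Lemma colim_scaleDr : right_distributive colim_scale +%R.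
Proof.
move=> a x y; apply: colim_car_eq => N tau ctau.
by rewrite cocone_valZ // !cocone_valD // !cocone_valZ // scalerDr.
Qed.
Lemma colim_scaleDl x : {morph colim_scale^~ x : a b / a + b}.
Proof.
move=> a b; apply: colim_car_eq => N tau ctau.
by rewrite cocone_valZ // !cocone_valD // !cocone_valZ // scalerDl.
Qed.

HB.instance Definition _ := GRing.Zmodule_isLmodule.Build (kr R) colim_car
  colim_scaleA colim_scale1 colim_scaleDr colim_scaleDl.

Definition cocone_pack := {N : kmod R & {tau : forall i, kmod_hom (D i) N | cocone tau}}.

Definition cocone_coord (p : cocone_pack) (x : colim_car) : projT1 p :=
  cocone_val (proj1_sig (projT2 p)) x.

Lemma cocone_coord_linear p : linear (cocone_coord p).
Proof. by case: p => N [tau ctau] a x y; rewrite /cocone_coord cocone_valD // cocone_valZ. Qed.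

HB.instance Definition _ (p : cocone_pack) :=
  GRing.isLinear.Build (kr R) colim_car (projT1 p) *:%R (cocone_coord p) (cocone_coord_linear p).

Let coord (p : cocone_pack) : {linear colim_car -> projT1 p} := cocone_coord p.

Lemma cocone_coord_inj x y : (forall p, coord p x = coord p y) -> x = y.
Proof.
by move=> xy; apply: colim_car_eq => N tau ctau; apply: (xy (existT _ N (exist _ tau ctau))).
Qed.

Definition colim_kmod : kmod R := kinit_kmod coord cocone_coord_inj.

Definition colim_in_fun (i : C) (x : D i) : colim_car := \pi_colim_car [:: existT _ i x].

Lemma cocone_val_in N tau (ctau : @cocone N tau) i x : cocone_val tau (colim_in_fun x) = tau i x.
Proof. by rewrite cocone_val_pi // /cocone_sum big_seq1. Qed.

Lemma colim_in_linear i : linear (@colim_in_fun i).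
Proof.
move=> a x y; apply: colim_car_eq => N tau ctau.
by rewrite cocone_valD // cocone_valZ // !cocone_val_in // linearP.
Qed.

Lemma colim_in_continuous i (p : cocone_pack) :
  continuous (open (kmtop (D i))) (open (kmtop (projT1 p))) (fun x => coord p (colim_in_fun x)).
Proof.
case: p => N [tau ctau].
have -> : (fun x => coord (existT _ N (exist _ tau ctau)) (colim_in_fun x)) = tau i.
  by apply/funext => x; apply: cocone_val_in.
exact: hfun_cont.
Qed.

Definition colim_in (i : C) : kmod_hom (D i) colim_kmod :=
  kinit_lift coord cocone_coord_inj (@colim_in_linear i) (@colim_in_continuous i).

Lemma colim_pi_cons p s :
  \pi_colim_car (p :: s) = colim_in (projT1 p) (projT2 p) + \pi_colim_car s.
Proof.
apply: colim_car_eq => N tau ctau.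
by rewrite cocone_valD // !cocone_val_pi // /cocone_sum big_cons big_seq1.
Qed.

Lemma colim_pi_sum s : \pi_colim_car s = \sum_(p <- s) colim_in (projT1 p) (projT2 p).
Proof. by elim: s => [|p s IHs]; rewrite ?big_nil // big_cons -IHs colim_pi_cons. Qed.

Lemma colim_kmod_is_colimit : is_colimit D colim_kmod colim_in.
Proof.
split=> [i j g x|N tau ctau].
  by apply: colim_car_eq => N tau ctau; rewrite /= !cocone_val_in.
exists (kinit_proj coord cocone_coord_inj (existT _ N (exist _ tau ctau))).
split=> [i x|v vtau y]; first exact: cocone_val_in.
rewrite -[in LHS](reprK y) colim_pi_sum raddf_sum.
by apply: eq_bigr => p _; apply: vtau.
Qed.

End Colimit.

Theorem lemma7p2 (R : kring) : kmod_complete R /\ kmod_cocomplete R.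
Proof.
split=> C D.
- by exists (lim_kmod D), (lim_proj D); apply: lim_kmod_is_limit.
- by exists (colim_kmod D), (colim_in D); apply: colim_kmod_is_colimit.
Qed.
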